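(* Let $m\ge4$, $B^m(x)=\frac{x}{1+x^{m-2}}$, $B^m_0(x)=x$ and $B^m_j(x)=B^m(B^m_{j-1}(x))$ for $j\ge1$. For every $j\ge0$, the equation $B^m_j(x)=-1$ has at least one root $x\in\mathbb{C}$, and this root is not a root of $B^m_{j'}(x)=-1$ for any $j'\neq j$. *)

From mathcomp Require Import all_boot all_order all_algebra.
From mathcomp Require Import all_reals.
From mathcomp Require Export complex.
Set Implicit Arguments. Unset Strict Implicit. Unset Printing Implicit Defensive.
Import GRing.Theory Num.Theory.
Local Open Scope ring_scope.

Definition Bm {F : fieldType} (m : nat) (y : F) : option F :=
  if 1 + y ^+ (m - 2) == 0 then None else Some (y / (1 + y ^+ (m - 2))).

Fixpoint Bmj {F : fieldType} (m j : nat) (x : F) : option F :=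
  match j with
  | 0 => Some x
  | j'.+1 => match Bmj m j' x with
             | Some y => Bm m y
             | None => None
             end
  end.

From mathcomp Require Import all_boot all_order all_algebra.
From mathcomp Require Import all_reals complex.
Import Order.TTheory GRing.Theory Num.Theory.
Local Open Scope ring_scope.

(* Existence: B^m has a nonzero preimage of every nonzero c, namely a root y
   of the trinomial y^(m-2) - y/c + 1 (here m - 2 >= 2 matters), so every
   B^m_j takes the value -1.  Uniqueness of j: B^m_(j+n)(x) = B^m_n(B^m_j(x)),
   so it suffices that the forward orbit of -1 never returns to -1.  If m is
   odd, -1 is a pole of B^m; if m is even, B^m maps [-1, 0) into (-1, 0). *)

Lemma BmjD {F : fieldType} (m a b : nat) (x : F) :
  Bmj m (a + b) x = obind (Bmj m b) (Bmj m a x).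
Proof.
elim: b => [|b IHb]; first by rewrite addn0; case: (Bmj m a x).
by rewrite addnS /= IHb; case: (Bmj m a x).
Qed.

Section OrbitOfMinusOne.

Variables (F : numFieldType) (m : nat).

Lemma Bm_neg1_odd : odd (m - 2) -> Bm m (-1 : F) = None.
Proof. by move=> odd_k; rewrite /Bm -signr_odd odd_k expr1 addrN eqxx. Qed.

Lemma Bm_neg_itv (y : F) : ~~ odd (m - 2) -> -1 <= y < 0 ->
  exists2 z, Bm m y = Some z & -1 < z < 0.
Proof.
move=> even_k /andP[ge_y_neg1 lt_y0].
have yk_gt0 : 0 < y ^+ (m - 2).
  by rewrite real_exprn_even_gt0 ?ltr0_real // ltr0_neq0 ?orbT.
have d_gt0 : 0 < 1 + y ^+ (m - 2) by rewrite addr_gt0.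
rewrite /Bm gt_eqF //; exists (y / (1 + y ^+ (m - 2))) => //.
rewrite ltr_pdivlMr // ltr_pdivrMr // mul0r lt_y0 andbT mulN1r.
by rewrite -subr_gt0 opprK addrA ltr_wpDl // -(opprK 1) subr_ge0.
Qed.

Lemma Bmj_neg1_neq (n : nat) : Bmj m n.+1 (-1 : F) <> Some (-1).
Proof.
have [odd_k|even_k] := boolP (odd (m - 2)).
  by rewrite -add1n BmjD /= Bm_neg1_odd.
suff [z -> /andP[]] : exists2 z, Bmj m n.+1 (-1 : F) = Some z & -1 < z < 0.
  by move=> lt_neg1_z _ [z_eq]; rewrite z_eq ltxx in lt_neg1_z.
elim: n => [|n [y /= -> /andP[lt_neg1_y lt_y0]]].
  by apply: Bm_neg_itv; rewrite ?lexx ?ltrN10.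
by apply: Bm_neg_itv; rewrite ?ltW.
Qed.

Lemma Bmj_neg1_uniq (x : F) (i i' : nat) : (i < i')%N ->
  Bmj m i x = Some (-1) -> Bmj m i' x <> Some (-1).
Proof.
move=> lt_ii' Bi; rewrite -(subnKC lt_ii') addSnnS BmjD Bi /=.
exact: Bmj_neg1_neq.
Qed.

End OrbitOfMinusOne.

Lemma exists_trinomial_root (F : closedFieldType) (n : nat) (a : F) :
  (2 <= n)%N -> exists y : F, y ^+ n + 1 = a * y.
Proof.
case: n => [|[|n]] // _.
pose P (i : nat) : F := if i == 0%N then -1 else if i == 1%N then a else 0.
have [y] := @solve_monicpoly F n.+2 P isT.
rewrite 2!big_ord_recl big1 => [|i _]; last by rewrite /P mul0r.
rewrite /P /= expr0 expr1 mulr1 addr0 => root_y.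
by exists y; rewrite root_y addrAC addNr add0r.
Qed.

Lemma Bm_preimage (F : closedFieldType) (m : nat) (c : F) : (4 <= m)%N ->
  c != 0 -> exists2 y : F, y != 0 & Bm m y = Some c.
Proof.
move=> m_ge4 c_neq0.
have k_ge2 : (2 <= m - 2)%N by rewrite leq_subRL ?(leq_trans _ m_ge4).
have [y root_y] := @exists_trinomial_root F _ c^-1 k_ge2.
have y_neq0 : y != 0.
  apply: contra_eqN root_y => /eqP ->.
  by rewrite mulr0 expr0n gtn_eqF ?(leq_trans _ k_ge2) // add0r oner_neq0.
exists y => //.
rewrite /Bm addrC root_y (negPf (mulf_neq0 _ y_neq0)) ?invr_eq0 //.
by rewrite invfM invrK mulrC -mulrA mulVf ?mulr1.
Qed.

Lemma Bmj_surj (F : closedFieldType) (m j : nat) (c : F) : (4 <= m)%N ->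
  c != 0 -> exists x : F, Bmj m j x = Some c.
Proof.
move=> m_ge4; elim: j c => [|j IHj] c c_neq0; first by exists c.
have [y y_neq0 By] := @Bm_preimage F m c m_ge4 c_neq0.
by have [x Bjx] := IHj y y_neq0; exists x; rewrite /= Bjx.
Qed.

Theorem proposition2p11 (R : realType) (m : nat) (hm : (4 <= m)%N) (j : nat) :
  exists x : R[i],
    Bmj m j x = Some (-1) /\
    forall j' : nat, j' <> j -> Bmj m j' x <> Some (-1).
Proof.
have [x Bjx] : exists x : R[i], Bmj m j x = Some (-1).
  by apply: Bmj_surj hm _; rewrite oppr_eq0 oner_eq0.
exists x; split=> // j' /eqP; rewrite neq_ltn => /orP[lt_j'j|lt_jj'] Bj'x.
- exact: Bmj_neg1_uniq lt_j'j Bj'x Bjx.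
- exact: Bmj_neg1_uniq lt_jj' Bjx Bj'x.
Qed.
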